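(* Let $k\ge1$, $m=2k$, and let $R_m^+(\hat K)=P_m(\hat K)+\mathrm{span}\{\hat x^m\hat y,\ \hat x\hat y^m\}$. Let $g_{\pm1},\dots,g_{\pm k}$ be the $2k$ zeros of the Legendre polynomial of degree $2k$ on $[-1,1]$, indexed so that $0<g_1<\dots<g_k$ and $g_{-i}=-g_i$. Then every $\hat v\in R_m^+(\hat K)$ satisfies $$\sum_{\substack{i=-k\\ i\ne 0}}^{k}\frac{\hat v(1,g_i)-\hat v(-1,g_i)-\hat v(g_i,1)+\hat v(g_i,-1)}{g_i(1-g_i^2)\prod_{\substack{j=1\\ j\ne |i|}}^{k}(g_i^2-g_j^2)}=0.$$
   Context: $\hat K=[-1,1]^2$ with coordinates $(\hat x,\hat y)$; $P_m(\hat K)$ is the space of polynomials of total degree $\le m$. Empty products equal $1$. *)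

From HB Require Import structures.
From mathcomp Require Import all_boot all_order all_algebra.
Set Implicit Arguments. Unset Strict Implicit. Unset Printing Implicit Defensive.
Import Order.TTheory GRing.Theory Num.Theory.
Local Open Scope ring_scope.

(* Legendre polynomial of degree n, Rodrigues' formula:
   P_n = 1/(2^n n!) d^n/dx^n (x^2 - 1)^n. *)
Definition legendre (R : realFieldType) (n : nat) : {poly R} :=
  ((2 ^+ n * (n`!)%:R)^-1) *: ((('X ^+ 2 - 1) ^+ n) ^`(n)).

Definition mono2 (R : realFieldType) (i j : nat) (x y : R) : R := x ^+ i * y ^+ j.

Definition in_Rplus (R : realFieldType) (m : nat) (v : R -> R -> R) : Prop :=
  exists (c : 'I_m.+1 -> 'I_m.+1 -> R) (a b : R),
    forall x y : R,
      v x y = \sum_(i < m.+1) \sum_(j < m.+1 | (i + j <= m)%N) c i j * mono2 i j x y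
              + a * mono2 m 1 x y + b * mono2 1 m x y.

From HB Require Import structures.
From mathcomp Require Import all_boot all_order all_algebra.
From mathcomp Require Import ring zify.
Set Implicit Arguments. Unset Strict Implicit. Unset Printing Implicit Defensive.
Import Order.TTheory GRing.Theory Num.Theory.
Local Open Scope ring_scope.

(* Pairing the terms at g_i and -g_i (the denominator is odd in
   x) turns the sum into  Phi(v) = sum_l J(v, g_l) / D_l(g_l),  where J(v, x) is
   the odd part in x of the edge jump  v(1,x) - v(-1,x) - v(x,1) + v(x,-1)
   and D_l(x) = x (1 - x^2) prod_(j <> l) (x^2 - g_j^2).  The functional Phi
   is linear in v, so it suffices to treat monomials x^i y^j.  The odd part of
   the jump kills every monomial unless i and j are both odd; in particular the
   two extra functions x^m y, x y^m (m = 2k even) contribute nothing.  For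
   i = 2p+1, j = 2q+1 with p + q < k, J/D_l is 4 (u^q - u^p) / ((1 - u) W_l)
   with u = g_l^2 and W_l the Lagrange node weight of g_l^2 among the squared
   zeros; expanding the geometric quotient leaves sums  sum_l u_l^t / W_l  with
   t <= k - 2, which vanish since they are (k-1)-st divided differences of the
   polynomial X^t.  The only property of the Legendre zeros that is needed is
   that they avoid 1, which follows from the normalization P_n(1) = 1. *)

Section DividedDifference.
Variables (F : fieldType) (k : nat) (u : 'I_k -> F).
Hypothesis u_inj : injective u.

(* The product of ('X - u_j) over the nodes other than u_l, and its value at
   u_l: the Lagrange basis polynomial at u_l is their quotient. *)
Definition omit_node (l : 'I_k) : {poly F} := \prod_(j < k | j != l) ('X - (u j)%:P).
Definition node_weight (l : 'I_k) : F := \prod_(j < k | j != l) (u l - u j).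

Lemma omit_node_at_node (l : 'I_k) : (omit_node l).[u l] = node_weight l.
Proof. by rewrite horner_prod; apply: eq_bigr => j _; rewrite hornerXsubC. Qed.

Lemma omit_node_vanish (l j : 'I_k) : j != l -> (omit_node l).[u j] = 0.
Proof. by move=> jl; rewrite horner_prod (bigD1 j) //= hornerXsubC subrr mul0r. Qed.

Lemma node_weight_neq0 (l : 'I_k) : node_weight l != 0.
Proof. by apply/prodf_neq0 => j jl; rewrite subr_eq0 (inj_eq u_inj) eq_sym. Qed.

Lemma omit_node_monic (l : 'I_k) : omit_node l \is monic.
Proof. exact: monic_prod_XsubC. Qed.

Lemma size_omit_node (l : 'I_k) : size (omit_node l) = k.
Proof.
rewrite size_prod => [|j _]; last by rewrite polyXsubC_eq0.
rewrite (eq_bigr (fun=> 2%N)) => [|j _]; last by rewrite size_XsubC.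
rewrite sum_nat_const cardC1 card_ord; case: k l => [[]//|n _].
by rewrite /= muln2 -addnn -addSn addnK.
Qed.

Lemma lagrange_interpolation (f : {poly F}) : (size f <= k)%N ->
  f = \sum_(l < k) (f.[u l] / node_weight l) *: omit_node l.
Proof.
move=> szf; set L := \sum_(l < k) _; apply/eqP; rewrite eq_sym -subr_eq0; apply/eqP.
apply: (@roots_geq_poly_eq0 _ _ (map u (enum 'I_k))).
- apply/allP => _ /mapP [l _ ->]; rewrite /root !hornerE horner_sum.
  rewrite (bigD1 l) //= big1 => [|j jl]; last by rewrite hornerZ omit_node_vanish ?mulr0 // eq_sym.
  by rewrite hornerZ omit_node_at_node divfK ?node_weight_neq0 // addr0 subrr.
- by rewrite map_inj_uniq ?enum_uniq.
rewrite size_map size_enum_ord (leq_trans (size_polyD _ _)) // geq_max size_polyN.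
rewrite szf andbT /L; elim/big_ind: _ => [|p q hp hq|l _]; first by rewrite size_poly0.
  by rewrite (leq_trans (size_polyD _ _)) // geq_max hp hq.
by rewrite (leq_trans (size_scale_leq _ _)) // size_omit_node.
Qed.

Lemma divided_difference_coef (f : {poly F}) : (size f <= k)%N ->
  \sum_(l < k) f.[u l] / node_weight l = f`_k.-1.
Proof.
move=> /lagrange_interpolation fE; rewrite [in RHS]fE coef_sum; apply: eq_bigr => l _.
have lead1 : (omit_node l)`_k.-1 = 1.
  by rewrite -(size_omit_node l); apply/monicP/omit_node_monic.
by rewrite coefZ lead1 mulr1.
Qed.

Lemma divided_difference_low_degree (f : {poly F}) : (size f < k)%N ->
  \sum_(l < k) f.[u l] / node_weight l = 0.
Proof.
move=> szf; rewrite divided_difference_coef 1?ltnW // nth_default //.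
by rewrite -ltnS prednK // (leq_ltn_trans (leq0n _) szf).
Qed.
End DividedDifference.

Lemma derivn_multiple_root (R : comNzRingType) (a : R) (n j : nat) (q : {poly R}) :
  (j <= n)%N -> exists r : {poly R},
  (('X - a%:P) ^+ n * q)^`(j) = ('X - a%:P) ^+ (n - j) * (q *+ n ^_ j + ('X - a%:P) * r).
Proof.
elim: j => [_|j IH jn]; first by exists 0; rewrite subn0 ffactn0 mulr0 addr0.
have [r Hr] := IH (ltnW jn).
exists (r *+ (n - j.+1).+1 + (q *+ n ^_ j + ('X - a%:P) * r)^`()).
rewrite derivnS Hr ffactnSr; have -> : (n - j = (n - j.+1).+1)%N by rewrite subnSK.
by rewrite derivM deriv_exp derivXsubC mulnC mulrnA exprS /=; ring.
Qed.

Lemma derivn_multiple_root_at (R : comNzRingType) (a : R) (n : nat) (q : {poly R}) :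
  (('X - a%:P) ^+ n * q)^`(n).[a] = q.[a] *+ n`!.
Proof.
have [r ->] := derivn_multiple_root a q (leqnn n).
by rewrite subnn expr0 mul1r ffactnn !hornerE subrr mul0r addr0 hornerMn.
Qed.

Lemma legendre_at1 (R : realFieldType) (n : nat) : (legendre R n).[1] = 1.
Proof.
rewrite /legendre; have -> : ('X ^+ 2 - 1 : {poly R}) ^+ n = ('X - 1%:P) ^+ n * ('X + 1) ^+ n.
  by rewrite -exprMn; congr (_ ^+ _); rewrite polyC1; ring.
rewrite hornerZ derivn_multiple_root_at !hornerE.
have -> : (1 + 1 : R) = 2 by [].
rewrite -[2 ^+ n *+ _]mulr_natr mulVf //.
by rewrite mulf_neq0 ?expf_neq0 ?pnatr_eq0 -?lt0n ?fact_gt0.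
Qed.

Lemma legendre_root_neq1 (R : realFieldType) (n : nat) (x : R) :
  root (legendre R n) x -> x != 1.
Proof. by apply: contraTneq => ->; rewrite /root legendre_at1 oner_eq0. Qed.

Definition edge_jump (R : pzRingType) (w : R -> R -> R) (x : R) : R :=
  w 1 x - w (-1) x - w x 1 + w x (-1).

Definition odd_edge_jump (R : pzRingType) (w : R -> R -> R) (x : R) : R :=
  edge_jump w x - edge_jump w (-x).

Definition node_den (R : pzRingType) (k : nat) (g : 'I_k -> R) (l : 'I_k) (x : R) : R :=
  x * (1 - x ^+ 2) * \prod_(j < k | j != l) (x ^+ 2 - g j ^+ 2).

(* The quantity the theorem asserts to vanish, after pairing g_i with -g_i. *)
Definition edge_flux (R : fieldType) (k : nat) (g : 'I_k -> R) (w : R -> R -> R) : R :=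
  \sum_(l < k) odd_edge_jump w (g l) / node_den g l (g l).

(* node_den is odd in x, so the terms at x and -x combine into the odd part. *)
Lemma sum_opposite_nodes (R : fieldType) (k : nat) (g : 'I_k -> R) (l : 'I_k)
    (w : R -> R -> R) (x : R) :
  \sum_(s <- [:: 1; -1]) edge_jump w (s * x) / node_den g l (s * x) =
  odd_edge_jump w x / node_den g l x.
Proof.
rewrite !big_cons big_nil addr0 mul1r mulN1r /odd_edge_jump /node_den sqrrN.
by rewrite !mulNr invrN mulrN mulrBl.
Qed.

Section EdgeFluxLinear.
Variables (R : fieldType) (k : nat) (g : 'I_k -> R).

Lemma edge_flux_ext (w w' : R -> R -> R) :
  (forall x y, w x y = w' x y) -> edge_flux g w = edge_flux g w'.
Proof.
move=> ww'; apply: eq_bigr => l _.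
by rewrite /odd_edge_jump /edge_jump !ww'.
Qed.

Lemma edge_flux_add (w1 w2 : R -> R -> R) :
  edge_flux g (fun x y => w1 x y + w2 x y) = edge_flux g w1 + edge_flux g w2.
Proof.
rewrite /edge_flux -big_split; apply: eq_bigr => l _.
by rewrite /odd_edge_jump /edge_jump /=; ring.
Qed.

Lemma edge_flux_scale (c : R) (w : R -> R -> R) :
  edge_flux g (fun x y => c * w x y) = c * edge_flux g w.
Proof.
rewrite /edge_flux mulr_sumr; apply: eq_bigr => l _.
by rewrite /odd_edge_jump /edge_jump; ring.
Qed.

Lemma edge_flux_sum (I : Type) (r : seq I) (P : pred I) (F : I -> R -> R -> R) :
  edge_flux g (fun x y => \sum_(i <- r | P i) F i x y) =
  \sum_(i <- r | P i) edge_flux g (F i).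
Proof.
elim: r => [|a r IH].
  rewrite big_nil (@edge_flux_ext _ (fun _ _ => 0)) => [|x y]; last by rewrite big_nil.
  rewrite /edge_flux big1 // => l _.
  by rewrite /odd_edge_jump /edge_jump !subr0 addr0 subrr mul0r.
rewrite big_cons; case Pa: (P a); last first.
  by rewrite -IH; apply: edge_flux_ext => x y; rewrite big_cons Pa.
rewrite -IH -edge_flux_add; apply: edge_flux_ext => x y.
by rewrite big_cons Pa.
Qed.
End EdgeFluxLinear.

Lemma odd_edge_jump_mono (R : realFieldType) (i j : nat) (x : R) :
  odd_edge_jump (mono2 i j) x = if odd i && odd j then 4 * (x ^+ j - x ^+ i) else 0.
Proof.
rewrite /odd_edge_jump /edge_jump /mono2 !expr1n !(exprNn x).
by rewrite -(signr_odd _ i) -(signr_odd _ j); case: (odd i); case: (odd j) => /=; ring.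
Qed.

Lemma geometric_sum_diff (R : comPzRingType) (u : R) (p q : nat) :
  u ^+ q - u ^+ p = (1 - u) * (\sum_(t < p) u ^+ t - \sum_(t < q) u ^+ t).
Proof.
have Sp := subrX1 u p; have Sq := subrX1 u q.
by rewrite mulrBr -[(1 - u)]opprB !mulNr -Sp -Sq; ring.
Qed.

Section MonomialFlux.
Variables (R : realFieldType) (k : nat) (g : 'I_k -> R).
Hypotheses (g_neq0 : forall l, g l != 0) (g_sq_neq1 : forall l, g l ^+ 2 != 1).
Hypothesis g_sq_inj : injective (fun l => g l ^+ 2).

Lemma node_den_weight (l : 'I_k) :
  node_den g l (g l) = g l * (1 - g l ^+ 2) * node_weight (fun j => g j ^+ 2) l.
Proof. by []. Qed.

Lemma odd_mono_term (p q : nat) (l : 'I_k) :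
  odd_edge_jump (mono2 p.*2.+1 q.*2.+1) (g l) / node_den g l (g l) =
  4 * (\sum_(t < p) (g l ^+ 2) ^+ t / node_weight (fun j => g j ^+ 2) l
       - \sum_(t < q) (g l ^+ 2) ^+ t / node_weight (fun j => g j ^+ 2) l).
Proof.
have oddS n : odd n.*2.+1 by rewrite /= odd_double.
have powS n : g l ^+ n.*2.+1 = g l * (g l ^+ 2) ^+ n by rewrite exprS -mul2n exprM.
rewrite odd_edge_jump_mono !oddS !powS node_den_weight -!mulr_suml.
rewrite -mulrBr -mulrBl (geometric_sum_diff (g l ^+ 2) p q).
have w0 := node_weight_neq0 g_sq_inj l.
have u1 : 1 - g l ^+ 2 != 0 by rewrite subr_eq0 eq_sym.
by rewrite /=; field; rewrite g_neq0 u1 w0.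
Qed.

Lemma edge_flux_mono (i j : nat) :
  (odd i && odd j -> (i + j <= 2 * k)%N) -> edge_flux g (mono2 i j) = 0.
Proof.
move=> deg_ij; case oij: (odd i && odd j); last first.
  by rewrite /edge_flux big1 // => l _; rewrite odd_edge_jump_mono oij mul0r.
have /andP [oi oj] := oij; have := deg_ij oij.
rewrite -(odd_double_half i) -(odd_double_half j) oi oj.
set p := i./2; set q := j./2 => deg_pq.
have pq : (p + q < k)%N by move: deg_pq; rewrite -!mul2n /=; lia.
rewrite /edge_flux; under eq_bigr do rewrite odd_mono_term.
rewrite -mulr_sumr sumrB exchange_big [X in _ - X]exchange_big /=.
have low t : (t < p + q)%N ->
    \sum_(l < k) (g l ^+ 2) ^+ t / node_weight (fun j => g j ^+ 2) l = 0.
  move=> ht; transitivity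
    (\sum_(l < k) ('X^t).[g l ^+ 2] / node_weight (fun j => g j ^+ 2) l).
    by apply: eq_bigr => l _; rewrite hornerXn.
  apply: (divided_difference_low_degree g_sq_inj).
  by rewrite size_polyXn (leq_ltn_trans ht pq).
by rewrite !big1 ?subrr ?mulr0 // => t _; apply: low; have := ltn_ord t; lia.
Qed.
End MonomialFlux.

Lemma sq_inj_increasing (R : realDomainType) (k : nat) (g : 'I_k -> R) :
  (forall i, 0 < g i) -> (forall i j : 'I_k, (i < j)%N -> g i < g j) ->
  injective (fun l => g l ^+ 2).
Proof.
move=> g_pos g_incr a b /eqP; rewrite eqrXn2 ?ltW // => /eqP gab.
case: (ltngtP a b) => [ab|ba|/val_inj //].
  by move: (g_incr _ _ ab); rewrite gab ltxx.
by move: (g_incr _ _ ba); rewrite gab ltxx.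
Qed.

Theorem mainTheorem5 (R : realFieldType) (k : nat) (hk : (0 < k)%N)
  (g : 'I_k -> R)
  (g_pos : forall i, 0 < g i)
  (g_incr : forall i j : 'I_k, (i < j)%N -> g i < g j)
  (g_root : forall i, root (legendre R (2 * k)) (g i))
  (v : R -> R -> R) (hv : in_Rplus (2 * k) v) :
  \sum_(i < k) \sum_(s <- [:: 1; -1])
     (let x := s * g i in
      (v 1 x - v (-1) x - v x 1 + v x (-1)) /
      (x * (1 - x ^+ 2) * \prod_(j < k | j != i) (x ^+ 2 - g j ^+ 2))) = 0.
Proof.
have g_neq0 l : g l != 0 by rewrite gt_eqF.
have g_sq_neq1 l : g l ^+ 2 != 1.
  by rewrite sqrp_eq1 ?ltW // (legendre_root_neq1 (g_root l)).
have g_sq_inj := sq_inj_increasing g_pos g_incr.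
transitivity (edge_flux g v); first by apply: eq_bigr => i _; exact: sum_opposite_nodes.
have [c [a [b /edge_flux_ext ->]]] := hv.
have odd2k : odd (2 * k) = false by rewrite oddM.
rewrite !edge_flux_add !edge_flux_scale !edge_flux_mono ?odd2k ?andbF //.
rewrite !mulr0 !addr0 edge_flux_sum big1 // => i _.
rewrite edge_flux_sum big1 // => j deg_ij.
by rewrite edge_flux_scale edge_flux_mono ?mulr0.
Qed.
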